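(* Let $1\leq p\leq\infty$, let $\mathcal{M}$ be a $\mathrm{C}^{p+1}$-manifold of dimension $n\geq1$, let $\mathcal{V}$ be a complete $\mathrm{C}^p$-vector field on $\mathcal{M}$ every integral curve of which is periodic (constant integral curves included), let $\mathcal{B}$ be a complex Banach space, and let $\lambda\in\mathbb{C}$ with $\mathrm{Re}\,\lambda\neq0$. Then for every $\epsilon\geq0$ and every $y\in\mathrm{C}^1_{\mathcal{V}}(\mathcal{M};\mathcal{B})$ satisfying $\|\mathcal{V}y-\lambda y\|_\infty\leq\epsilon$, one has $\|y\|_\infty\leq\epsilon|\mathrm{Re}\,\lambda|^{-1}$.
   Context: $\|g\|_\infty=\sup_{x\in\mathcal{M}}\|g(x)\|$. For a map $y:\mathcal{M}\to\mathcal{B}$ that is differentiable along every integral curve of $\mathcal{V}$, $\mathcal{V}y(x)=(y\circ\gamma_x)'(0)$, where $\gamma_x$ is the integral curve of $\mathcal{V}$ with $\gamma_x(0)=x$. $\mathrm{C}^1_{\mathcal{V}}(\mathcal{M};\mathcal{B})$ denotes the set of maps $y:\mathcal{M}\to\mathcal{B}$ that are continuous, differentiable along every integral curve of $\mathcal{V}$, and such that $\mathcal{V}y$ is continuous. A vector field is complete if its flow is defined on all of $\mathbb{R}\times\mathcal{M}$. *)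

From mathcomp Require Import all_boot all_algebra.
From mathcomp Require Import complex.
From mathcomp Require Import all_classical all_reals all_analysis.
Import numFieldNormedType.Exports.
Set Implicit Arguments. Unset Strict Implicit. Unset Printing Implicit Defensive.
Local Open Scope classical_set_scope.
Local Open Scope ring_scope.

(* The (global) flow of a complete vector field on the space M:
   phi t x = gamma_x(t), the integral curve through x evaluated at time t.
   Completeness = the flow is defined on all of R x M. *)
Definition is_global_flow (R : realType) (M : topologicalType)
  (phi : R -> M -> M) : Prop :=
  [/\ (forall x, phi 0 x = x),
      (forall s t x, phi (s + t) x = phi s (phi t x)) &
      continuous (fun p : R * M => phi p.1 p.2)].

Definition all_orbits_periodic (R : realType) (M : topologicalType)
  (phi : R -> M -> M) : Prop :=
  forall x, exists T : R, 0 < T /\ phi T x = x.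

Definition Vquot (R : realType) (M : topologicalType)
  (B : normedModType R[i]) (phi : R -> M -> M) (y : M -> B) (x : M) (t : R)
  : R -> B :=
  fun h => (Complex h^-1 0) *: (y (phi (t + h) x) - y (phi t x)).

Definition curve_derivable (R : realType) (M : topologicalType)
  (B : normedModType R[i]) (phi : R -> M -> M) (y : M -> B) (x : M) (t : R)
  : Prop :=
  cvg (Vquot phi y x t @ 0^').

(* V y (x) = (y o gamma_x)'(0) *)
Definition Vop (R : realType) (M : topologicalType)
  (B : normedModType R[i]) (phi : R -> M -> M) (y : M -> B) : M -> B :=
  fun x => lim (Vquot phi y x 0 @ 0^').

Definition C1V (R : realType) (M : topologicalType)
  (B : normedModType R[i]) (phi : R -> M -> M) (y : M -> B) : Prop :=
  [/\ continuous y,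
      (forall x t, curve_derivable phi y x t) &
      continuous (Vop phi y)].

(* Fix x and let g t = y (phi t x); g is continuous and periodic, so |g| attains its
   maximum at some t0.  With D = V y (phi t0 x) and a small step h of the sign of
   Re l, g (t0 + h) ~ g t0 + h D and |D - l g t0| <= eps give
   (1 + h Re l) |g t0| <= |g (t0 + h)| + |h| (eps + o(1)) <= |g t0| + |h| (eps + o(1)),
   hence |Re l| |g t0| <= eps, and |y x| = |g 0| <= |g t0|. *)

From mathcomp Require Import all_boot all_order all_algebra.
From mathcomp Require Import complex.
From mathcomp Require Import all_classical all_reals all_analysis.
Import numFieldNormedType.Exports.
Set Implicit Arguments. Unset Strict Implicit. Unset Printing Implicit Defensive.
Import Order.TTheory GRing.Theory Num.Theory.
Local Open Scope classical_set_scope.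
Local Open Scope ring_scope.
Local Open Scope complex_scope.

Section PeriodicMaximum.
Variable R : realType.

Lemma periodicz (V : zmodType) (f : R -> V) (T : R) :
  periodic f T -> forall (z : int) a, f (a + T *~ z) = f a.
Proof.
move=> fT [n|n] a; first by rewrite -pmulrn periodicn.
by rewrite NegzE -nmulrn -[in RHS](subrK (T *+ n.+1) a) periodicn.
Qed.

Lemma periodic_continuous_max (f : R -> R) (T : R) :
  0 < T -> periodic f T -> continuous f -> exists t0, forall s, f s <= f t0.
Proof.
move=> T0 fT fc.
have [t0 _ t0max] := EVT_max (ltW T0) (continuous_subspaceT (A := `[0, T]) fc).
exists t0 => s; set k := Num.floor (s / T).
have /andP[ks sk] := floor_itv (s / T).
rewrite -(subrK (T *~ k) s) periodicz //; apply: t0max.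
rewrite in_itv /= -mulrzl subr_ge0 lerBlDr -[T in T + _]mul1r -mulrDl.
apply/andP; split; first by rewrite -ler_pdivlMr.
by rewrite -ler_pdivrMr // addrC; move: sk; rewrite intrD => /ltW.
Qed.

End PeriodicMaximum.

Section ComplexNorms.
Variable R : realType.

Lemma Re_normK (B : normedModType R[i]) (v : B) : (complex.Re `|v|)%:C = `|v|.
Proof. by rewrite RRe_real // ger0_real. Qed.

Lemma normc_real (x : R) : `|x%:C| = `|x|%:C.
Proof. by rewrite normc_def /= expr0n addr0 sqrtr_sqr. Qed.

Lemma continuous_Re_norm (T : topologicalType) (B : normedModType R[i])
    (g : T -> B) :
  continuous g -> continuous (fun t => complex.Re `|g t|).
Proof.
move=> gc t; apply/cvgrPdist_lt => e e0.
have /cvgrPdist_lt/(_ e%:C) := gc t; rewrite ltcR => /(_ e0).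
apply: filterS => s /(le_lt_trans (ler_dist_dist _ _)).
by rewrite -[`|g t|]Re_normK -[`|g s|]Re_normK -rmorphB normc_real ltcR.
Qed.

Lemma periodic_norm_max (B : normedModType R[i]) (g : R -> B) (T : R) :
  0 < T -> periodic g T -> continuous g ->
  exists t0, forall s, `|g s| <= `|g t0|.
Proof.
move=> T0 gT gc.
have nT : periodic (fun t => complex.Re `|g t|) T by move=> t; rewrite gT.
have [t0 t0max] := periodic_continuous_max T0 nT (continuous_Re_norm gc).
by exists t0 => s; rewrite -[`|g s|]Re_normK -[`|g t0|]Re_normK lecR.
Qed.

End ComplexNorms.

Section NormMaximum.
Variables (R : realType) (B : normedModType R[i]).

Lemma norm_step_bound (l eps d : R[i]) (h : R) (g0 q D : B) :
  0 < h * complex.Re l -> `|g0 + h%:C *: q| <= `|g0| ->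
  `|D - l *: g0| <= eps -> `|D - q| <= d ->
  `|complex.Re l|%:C * `|g0| <= eps + d.
Proof.
set r := complex.Re l => hr g1_le Dl Dq.
have h_gt0 : 0 < `|h|.
  by rewrite normr_gt0; apply: contraTneq hr => ->; rewrite mul0r ltxx.
have hrE : h * r = `|h| * `|r| by rewrite -normrM gtr0_norm.
have Re_le : (1 + h * r)%:C <= `|1 + h%:C * l|.
  apply: le_trans (normc_ge_Re _); rewrite lecR.
  have -> : forall z : R[i], complex.Re (1 + h%:C * z) = 1 + h * complex.Re z.
    by case=> a b /=; rewrite mul0r subr0.
  exact: ler_norm.
have split_step : (1 + h%:C * l) *: g0
    = (g0 + h%:C *: q) - h%:C *: (q - D) - h%:C *: (D - l *: g0).
  rewrite scalerDl scale1r !scalerBr scalerA.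
  set a := h%:C *: q; set b := h%:C *: D; set c := (h%:C * l) *: g0.
  by rewrite !opprB !addrA [g0 + a + b]addrAC addrK [g0 + b + c]addrAC addrK.
have : `|1 + h%:C * l| * `|g0| <= `|g0| + `|h|%:C * (d + eps).
  rewrite -normrZ split_step mulrDr addrA -normc_real.
  apply: le_trans (ler_normB _ _) _; rewrite normrZ lerD //; last exact: ler_wpM2l.
  apply: le_trans (ler_normB _ _) _; rewrite normrZ lerD //.
  by rewrite distrC; exact: ler_wpM2l.
move=> /(le_trans (ler_wpM2r (normr_ge0 g0) Re_le)).
rewrite rmorphD rmorph1 mulrDl mul1r lerD2l hrE rmorphM -mulrA.
by rewrite ler_pM2l ?ltcR // addrC.
Qed.

Lemma norm_max_bound (g : R -> B) (t0 : R) (D : B) (l eps : R[i]) :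
  complex.Re l != 0 -> (forall s, `|g s| <= `|g t0|) ->
  (fun h : R => (h^-1)%:C *: (g (t0 + h) - g t0)) @ 0^' --> D ->
  `|D - l *: g t0| <= eps ->
  `|complex.Re l|%:C * `|g t0| <= eps.
Proof.
move=> l_neq0 gmax gD Dl; apply/ler_addgt0Pr => d d_gt0.
move/cvgrPdist_lt: gD => /(_ d d_gt0) /nbhs_ballP[e /= e_gt0 near_D].
have e2_gt0 : 0 < e / 2 by rewrite divr_gt0.
pose h := Num.sg (complex.Re l) * (e / 2).
have h_norm : `|h| = e / 2 by rewrite normrM normr_sg l_neq0 mul1r gtr0_norm.
have h_neq0 : h != 0 by rewrite -normr_gt0 h_norm.
have h_ball : ball 0 e h.
  by rewrite /ball /= sub0r normrN h_norm ltr_pdivrMr ?ltr_pMr ?ltr1n.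
apply: (norm_step_bound (h := h) _ _ Dl (ltW (near_D h h_ball h_neq0))).
- by rewrite /h mulrAC -normrEsg mulr_gt0 // normr_gt0.
- by rewrite scalerA -rmorphM divff // scale1r addrC subrK; exact: gmax.
Qed.

End NormMaximum.

Section Flow.
Variables (R : realType) (M : topologicalType) (phi : R -> M -> M).
Hypothesis phi_flow : is_global_flow phi.

Lemma continuous_orbit (x : M) : continuous (phi^~ x).
Proof.
case: phi_flow => _ _ phi_cont t.
apply: (continuous_comp (f := fun s : R => (s, x))) (phi_cont _).
exact: cvg_pair cvg_id (cvg_cst x).
Qed.

Lemma flow_period (x : M) (T : R) : phi T x = x -> forall t, phi (t + T) x = phi t x.
Proof. by case: phi_flow => _ phiD _ phiT t; rewrite phiD phiT. Qed.

Lemma Vquot_orbit (B : normedModType R[i]) (y : M -> B) (x : M) (t : R) :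
  Vquot phi y (phi t x) 0 = Vquot phi y x t.
Proof.
case: phi_flow => phi0 phiD _; apply: funext => h.
by rewrite /Vquot add0r phi0 -phiD (addrC h t).
Qed.

End Flow.

Theorem corollary2p3 (R : realType) (M : topologicalType)
  (phi : R -> M -> M) (B : completeNormedModType R[i]) (l : R[i])
  (hflow : is_global_flow phi) (hper : all_orbits_periodic phi)
  (hl : complex.Re l != 0) (eps : R) (heps : 0 <= eps) (y : M -> B)
  (hy : C1V phi y)
  (hbound : forall x, `| Vop phi y x - l *: y x | <= Complex eps 0) :
  forall x, `| y x | <= Complex (eps / `| complex.Re l |) 0.
Proof.
move=> x; case: hy => y_cont y_der _.
have [T [T_gt0 phiT]] := hper x.
pose g t := y (phi t x).
have g_cont : continuous g.
  by move=> t; apply: continuous_comp; [exact: continuous_orbit | exact: y_cont].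
have g_per : periodic g T by move=> t; rewrite /g (flow_period hflow phiT).
have [t0 g_max] := periodic_norm_max T_gt0 g_per g_cont.
have gD : Vquot phi y x t0 @ 0^' --> Vop phi y (phi t0 x).
  by rewrite -Vquot_orbit //; exact: y_der.
have := norm_max_bound hl g_max gD (hbound (phi t0 x) : _ <= eps%:C).
have Rel_gt0 : 0 < `|complex.Re l|%:C by rewrite ltcR normr_gt0.
rewrite mulrC -ler_pdivlMr // => bound.
have <- : g 0 = y x by case: hflow => phi0 _ _; rewrite /g phi0.
change (`|g 0| <= (eps / `|complex.Re l|)%:C); rewrite rmorphM fmorphV.
exact: le_trans (g_max 0) bound.
Qed.
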